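(* Let $\mathcal{Y}_u=\{y_1,\dots,y_L\}$ be a finite set of (unseen test) class labels, and let $\mathbf{A}$ be a label–attribute matrix assigning to each label $y\in\mathcal{Y}_u$ a binary attribute vector $\mathbf{a}_y\in\{0,1\}^{N_a}$, where the vectors $\mathbf{a}_y$, $y\in\mathcal{Y}_u$, are pairwise distinct. Let $f^{(1)},\dots,f^{(N_a)}$ be binary attribute classifiers (e.g. trained on a training set $D_s$), and write $f(x)=(f^{(1)}(x),\dots,f^{(N_a)}(x))\in\{0,1\}^{N_a}$. Each input $x$ is classified by assigning it a label $\hat y(x)\in\mathcal{Y}_u$ whose attribute vector is closest to $f(x)$, i.e. $d(f(x),\mathbf{a}_{\hat y(x)})\le d(f(x),\mathbf{a}_{y})$ for all $y\in\mathcal{Y}_u$ (ties broken arbitrarily). Let $D_u=\{(x_i,y_i): i=1,\dots,N_u\}$ with $y_i\in\mathcal{Y}_u$ be a test set, and for each $m=1,\dots,N_a$ let $B_m\ge 0$ be an upper bound on the prediction loss of the $m$-th attribute classifier, i.e. $\frac{1}{N_u}\sum_{i=1}^{N_u}\Delta\big(f^{(m)}(x_i),\mathbf{a}_{y_i}^{(m)}\big)\le B_m$. Set $\bar B=\frac{1}{N_a}\sum_{m=1}^{N_a}B_m$. Then the generalization error rate $k/N_u$, where $k=\#\{i:\hat y(x_i)\neq y_i\}$ is the number of misclassified test samples, satisfies $$\frac{k}{N_u}\le \frac{2N_a\bar B}{\tau}.$$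
   Context: For binary values $a,b$, $\Delta(a,b)=1$ if $a\neq b$ and $0$ otherwise. For vectors $\mathbf{u},\mathbf{v}\in\{0,1\}^{N_a}$ with $m$-th entries $\mathbf{u}^{(m)},\mathbf{v}^{(m)}$, the generalized attribute distance is the Hamming distance $d(\mathbf{u},\mathbf{v})=\sum_{m=1}^{N_a}\Delta(\mathbf{u}^{(m)},\mathbf{v}^{(m)})$. The minimum attribute distance of $\mathbf{A}$ is $\tau=\min_{y\neq y'}d(\mathbf{a}_y,\mathbf{a}_{y'})$, the minimum over pairs of distinct labels $y,y'\in\mathcal{Y}_u$ (so $\tau\ge 1$). *)

From mathcomp Require Import all_boot all_order all_algebra.
Set Implicit Arguments. Unset Strict Implicit. Unset Printing Implicit Defensive.
Import Order.TTheory GRing.Theory Num.Theory.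

Definition Delta (a b : bool) : nat := (a != b).

Definition attr_dist (Na : nat) (u v : {ffun 'I_Na -> bool}) : nat :=
  \sum_(m < Na) Delta (u m) (v m).

Definition is_min_attr_dist (Y : finType) (Na : nat)
  (A : Y -> {ffun 'I_Na -> bool}) (t : nat) : Prop :=
  (exists y y' : Y, y != y' /\ attr_dist (A y) (A y') = t) /\
  (forall y y' : Y, y != y' -> t <= attr_dist (A y) (A y'))%N.

From mathcomp Require Import all_boot all_order all_algebra.
Set Implicit Arguments. Unset Strict Implicit. Unset Printing Implicit Defensive.
Import Order.TTheory GRing.Theory Num.Theory.
Local Open Scope ring_scope.

(* Nearest-codeword decoding: if a test point is misclassified, its true and
   predicted attribute vectors are at distance at least tau, and by the
   triangle inequality and the choice of the prediction, the prediction f x is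
   at distance at least tau/2 from the true vector.  Summing over the test set,
   tau * k is at most twice the total Hamming loss, which is the sum of the
   per-attribute losses, each bounded by N_u B_m. *)

Lemma Delta_sym a b : Delta a b = Delta b a.
Proof. by rewrite /Delta eq_sym. Qed.

Lemma Delta_triangle a b c : (Delta a c <= Delta a b + Delta b c)%N.
Proof. by case: a; case: b; case: c. Qed.

Section HammingDistance.
Variable n : nat.
Implicit Types u v w : {ffun 'I_n -> bool}.

Lemma attr_dist_sym u v : attr_dist u v = attr_dist v u.
Proof. by apply: eq_bigr => m _; rewrite Delta_sym. Qed.

Lemma attr_dist_triangle u v w :
  (attr_dist u w <= attr_dist u v + attr_dist v w)%N.
Proof.
by rewrite /attr_dist -big_split; apply: leq_sum => m _; apply: Delta_triangle.
Qed.

Lemma attr_dist_eq0 u v : attr_dist u v = 0%N -> u = v.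
Proof.
move/eqP; rewrite sum_nat_eq0 => /forallP d0; apply/ffunP => m.
by have /implyP/(_ isT) := d0 m; rewrite /Delta eqb0 negbK => /eqP.
Qed.

Lemma nearest_codeword_dist u c c' :
  (attr_dist u c <= attr_dist u c')%N -> (attr_dist c c' <= 2 * attr_dist u c')%N.
Proof.
move=> near; rewrite mul2n -addnn.
by apply: leq_trans (attr_dist_triangle c u c') _; rewrite attr_dist_sym leq_add2r.
Qed.

End HammingDistance.

Lemma min_attr_dist_gt0 (Y : finType) (Na : nat) (A : Y -> {ffun 'I_Na -> bool})
    (t : nat) :
  injective A -> is_min_attr_dist A t -> (0 < t)%N.
Proof.
move=> injA [[y [y' [neq <-]]] _]; rewrite lt0n; apply: contra neq => /eqP d0.
by apply/eqP/injA/attr_dist_eq0.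
Qed.

Lemma misclassified_count_le (Y : finType) (X : Type) (Na N : nat)
    (A : Y -> {ffun 'I_Na -> bool}) (f : X -> {ffun 'I_Na -> bool})
    (yhat : X -> Y) (xs : 'I_N -> X) (ys : 'I_N -> Y) (t : nat) :
  (forall y y', y != y' -> t <= attr_dist (A y) (A y'))%N ->
  (forall x y, attr_dist (f x) (A (yhat x)) <= attr_dist (f x) (A y))%N ->
  (t * #|[set i | yhat (xs i) != ys i]|
     <= 2 * \sum_(i < N) attr_dist (f (xs i)) (A (ys i)))%N.
Proof.
move=> tmin near; rewrite mulnC -sum_nat_const big_distrr /=.
rewrite [X in (_ <= X)%N](bigID [in [set i | yhat (xs i) != ys i]]) /=.
apply: leq_trans (leq_addr _ _); apply: leq_sum => i.
rewrite inE => /tmin /leq_trans; apply; exact: nearest_codeword_dist.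
Qed.

Lemma total_attr_loss_le (R : realFieldType) (Na N : nat)
    (u v : 'I_N -> {ffun 'I_Na -> bool}) (B : 'I_Na -> R) :
  (0 < N)%N ->
  (forall m, (\sum_(i < N) (Delta (u i m) (v i m))%:R) / N%:R <= B m) ->
  (\sum_(i < N) attr_dist (u i) (v i))%:R <= N%:R * \sum_(m < Na) B m.
Proof.
move=> N_gt0 HB; rewrite /attr_dist exchange_big natr_sum mulr_sumr.
by apply: ler_sum => m _; rewrite natr_sum mulrC -ler_pdivrMr ?ltr0n.
Qed.

Lemma mul_natr_mean (R : numFieldType) (n : nat) (F : 'I_n -> R) :
  n%:R * ((\sum_(i < n) F i) / n%:R) = \sum_(i < n) F i.
Proof.
case: n F => [|n] F; first by rewrite big_ord0 mul0r.
by rewrite mulrCA mulfV ?mulr1 ?pnatr_eq0.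
Qed.

Theorem theorem1 (R : realFieldType) (Y : finType) (X : Type) (Na Nu : nat)
  (A : Y -> {ffun 'I_Na -> bool}) (f : X -> {ffun 'I_Na -> bool})
  (yhat : X -> Y) (xs : 'I_Nu -> X) (ys : 'I_Nu -> Y) (B : 'I_Na -> R)
  (tau : nat) :
  (1 < #|Y|)%N ->
  injective A ->
  is_min_attr_dist A tau ->
  (forall x y, (attr_dist (f x) (A (yhat x)) <= attr_dist (f x) (A y))%N) ->
  (0 < Nu)%N ->
  (forall m, 0 <= B m) ->
  (forall m, (\sum_(i < Nu) (Delta (f (xs i) m) (A (ys i) m))%:R) / Nu%:R <= B m) ->
  let Bbar := (\sum_(m < Na) B m) / Na%:R in
  let k := #|[set i : 'I_Nu | yhat (xs i) != ys i]| in
  k%:R / Nu%:R <= 2 * Na%:R * Bbar / tau%:R.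
Proof.
move=> _ injA min_tau near Nu_gt0 _ HB; cbv zeta.
have tau_gt0 := min_attr_dist_gt0 injA min_tau.
have count := misclassified_count_le xs ys min_tau.2 near.
have loss := total_attr_loss_le Nu_gt0 HB.
rewrite -[2 * Na%:R * _]mulrA mul_natr_mean.
rewrite ler_pdivrMr ?ltr0n // mulrAC ler_pdivlMr ?ltr0n //.
apply: le_trans (_ : (2 * \sum_(i < Nu) attr_dist (f (xs i)) (A (ys i)))%:R <= _).
  by rewrite mulrC -natrM ler_nat.
by rewrite natrM -mulrA ler_wpM2l // mulrC.
Qed.
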